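(* Let $\mathcal G=(\mathcal V,\mathcal E)$ be a weakly connected digraph and let $e$ be a tight edge of $\mathcal G$. Then $\gamma(\mathcal G+e)=\gamma(\mathcal G)-1$, where $\mathcal G+e=(\mathcal V,\mathcal E\cup\{e\})$.
   Context: For a strongly connected component (SCC) $\mathcal S$ of a digraph $(\mathcal V,\mathcal E)$, let $\mathcal O_{\mathcal S}=\{(u,v)\in\mathcal E:u\in\mathcal S,v\notin\mathcal S\}$ and $\mathcal I_{\mathcal S}=\{(u,v)\in\mathcal E:u\notin\mathcal S,v\in\mathcal S\}$. $\mathcal S$ is a source SCC (s-SCC) if $\mathcal O_{\mathcal S}\neq\emptyset$ and $\mathcal I_{\mathcal S}=\emptyset$, and a target SCC (t-SCC) if $\mathcal O_{\mathcal S}=\emptyset$ and $\mathcal I_{\mathcal S}\neq\emptyset$. $\gamma(\mathcal G)$ is the maximum of the number of s-SCCs and the number of t-SCCs of $\mathcal G$. Write $a\rightsquigarrow b$ if there is a directed path from $a$ to $b$. If $\mathcal G$ has $\alpha$ s-SCCs and $\beta$ t-SCCs, an edge $(t,s)\in(\mathcal V\times\mathcal V)\setminus\mathcal E$ is tight if: (i) $s$ belongs to an s-SCC; (ii) $t$ belongs to a t-SCC; (iii) either $\alpha=1$ or there is $s'$ in an s-SCC different from that of $s$ with $s'\rightsquigarrow t$; (iv) either $\beta=1$ or there is $t'$ in a t-SCC different from that of $t$ with $s\rightsquigarrow t'$. *)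

From mathcomp Require Import all_boot.
Set Implicit Arguments. Unset Strict Implicit. Unset Printing Implicit Defensive.

Section Digraph.
Variable V : finType.
Variable E : rel V.

Definition reach (a b : V) : bool := connect E a b.

Definition scc (x : V) : {set V} := [set y | reach x y && reach y x].

Definition is_scc (S : {set V}) : bool := [exists x, S == scc x].

Definition out_edges (S : {set V}) : {set V * V} :=
  [set p | E p.1 p.2 && (p.1 \in S) && (p.2 \notin S)].
Definition in_edges (S : {set V}) : {set V * V} :=
  [set p | E p.1 p.2 && (p.1 \notin S) && (p.2 \in S)].

Definition is_sSCC (S : {set V}) : bool :=
  [&& is_scc S, out_edges S != set0 & in_edges S == set0].
Definition is_tSCC (S : {set V}) : bool :=
  [&& is_scc S, out_edges S == set0 & in_edges S != set0].

Definition n_sSCC : nat := #|[set S : {set V} | is_sSCC S]|.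
Definition n_tSCC : nat := #|[set S : {set V} | is_tSCC S]|.

Definition gamma : nat := maxn n_sSCC n_tSCC.

Definition weakly_connected : Prop :=
  forall x y : V, connect [rel a b | E a b || E b a] x y.

Definition tight (t s : V) : Prop :=
  [/\ ~~ E t s,
      is_sSCC (scc s),
      is_tSCC (scc t),
      n_sSCC = 1 \/ exists s' : V, [/\ is_sSCC (scc s'), scc s' != scc s & reach s' t]
    & n_tSCC = 1 \/ exists t' : V, [/\ is_tSCC (scc t'), scc t' != scc t & reach s t']].
End Digraph.

Definition add_edge (V : finType) (E : rel V) (t s : V) : rel V :=
  [rel x y | E x y || ((x == t) && (y == s))].

From mathcomp Require Import all_boot zify.
Set Implicit Arguments. Unset Strict Implicit. Unset Printing Implicit Defensive.

(* Adding the edge (t, s) only creates the new paths x ~> t -> s ~> y.  Hence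
   a component avoiding s and t is a source before iff it is one after, while
   t never lies in a source: the number of s-SCCs drops by one, unless the new
   component of s is again a source.  By tightness (iii) that can only
   happen if s was the unique source; then t lies in the new component of s, so
   t is no longer in a target, and the out-edge of that component leads to a
   target other than that of t (by weak connectivity every vertex reaches a
   target), so gamma still drops by one.  Reversing all edges swaps sources
   and targets, which gives the symmetric case. *)

Section Digraph.
Variables (V : finType) (G : rel V).
Implicit Types (C : {set V}) (x y z : V).

Lemma mem_scc x : x \in scc G x.
Proof. by rewrite inE /reach connect0. Qed.

Lemma scc_eq x y : y \in scc G x -> scc G y = scc G x.
Proof.
rewrite inE /reach => /andP[xy yx]; apply/setP => z; rewrite !inE /reach.
apply/andP/andP => [[yz zy]|[xz zx]]; split.
- exact: connect_trans xy yz.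
- exact: connect_trans zy yx.
- exact: connect_trans yx xz.
- exact: connect_trans zx xy.
Qed.

Lemma is_scc_scc x : is_scc G (scc G x).
Proof. by apply/existsP; exists x. Qed.

Lemma sSCC_not_tSCC C : is_sSCC G C -> ~~ is_tSCC G C.
Proof. by case/and3P=> _ _ noin; rewrite /is_tSCC noin !andbF. Qed.

Lemma is_scc_memE C x : is_scc G C -> x \in C -> C = scc G x.
Proof. by move=> /existsP[y /eqP ->] /scc_eq ->. Qed.

Lemma in_edges0_reach C x y :
  in_edges G C == set0 -> x \in C -> reach G y x -> y \in C.
Proof.
move=> /eqP noin xC /connectP[p yp xE]; subst x; elim: p y yp xC => // z p IH y.
move=> /= /andP[Gyz zp] xC; have zC := IH z zp xC; apply: contraT => yC.
have: (y, z) \in in_edges G C by rewrite inE /= Gyz yC zC.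
by rewrite noin inE.
Qed.

Lemma out_edges0_reach C x y :
  out_edges G C == set0 -> x \in C -> reach G x y -> y \in C.
Proof.
move=> /eqP noout xC /connectP[p xp ->]; elim: p x xC xp => // z p IH x xC.
move=> /= /andP[Gxz zp]; apply: IH zp; apply: contraT => zC.
have: (x, z) \in out_edges G C by rewrite inE /= Gxz xC zC.
by rewrite noout inE.
Qed.

Lemma edges0_setT C x : weakly_connected G ->
  in_edges G C == set0 -> out_edges G C == set0 -> x \in C -> C = setT.
Proof.
move=> wc /eqP noin /eqP noout xC; apply/setP => y; rewrite inE.
have /connectP[p xp ->] := wc x y; elim: p x xC xp => // z p IH x xC.
move=> /= /andP[/orP[Gxz|Gzx] zp]; apply: IH zp; apply: contraT => zC.
  have: (x, z) \in out_edges G C by rewrite inE /= Gxz xC zC.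
  by rewrite noout inE.
have: (z, x) \in in_edges G C by rewrite inE /= Gzx xC zC.
by rewrite noin inE.
Qed.

Lemma reach_sink x :
  exists2 y, reach G x y & forall z, reach G y z -> reach G z y.
Proof.
have [y xy miny] :=
  arg_minnP (fun y => #|[set z | reach G y z]|) (connect0 G x).
exists y => // z yz.
have sub : [set w | reach G z w] \subset [set w | reach G y w].
  by apply/subsetP => w; rewrite !inE; apply: connect_trans.
have /eqP eq_zy : [set w | reach G z w] == [set w | reach G y w].
  by rewrite eqEcard sub miny //; apply: connect_trans xy yz.
by move/setP/(_ y): eq_zy; rewrite !inE /reach connect0 => ->.
Qed.

Lemma reach_tSCC x u v : weakly_connected G -> ~~ reach G u v ->
  exists2 y, reach G x y & is_tSCC G (scc G y).
Proof.
move=> wc nuv; have [y xy sinky] := reach_sink x; exists y => //.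
have noout : out_edges G (scc G y) == set0.
  apply/eqP/setP => -[a b]; rewrite !inE /=.
  apply/negbTE/negP => /andP[/andP[Gab /andP[ya _]]].
  have yb : reach G y b := connect_trans ya (connect1 Gab).
  by rewrite yb sinky.
rewrite /is_tSCC is_scc_scc noout; apply: contra nuv => noin.
have full := edges0_setT wc noin noout (mem_scc y).
have := in_setT u; have := in_setT v; rewrite -full !inE /reach.
by move=> /andP[yv _] /andP[_ uy]; apply: connect_trans uy yv.
Qed.

End Digraph.

Section AddEdge.
Variables (V : finType) (E E' : rel V) (t s : V).
Hypothesis E'E : E' =2 add_edge E t s.
Implicit Types (C : {set V}) (x y : V).

Lemma E'_ts : E' t s.
Proof. by rewrite E'E /add_edge /= !eqxx orbT. Qed.

Lemma reach_sub x y : reach E x y -> reach E' x y.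
Proof.
by apply: connect_sub => a b Eab; apply: connect1; rewrite E'E /add_edge /= Eab.
Qed.

Lemma reach_add_edge x y :
  reach E' x y = reach E x y || reach E x t && reach E s y.
Proof.
rewrite /reach; apply/idP/idP; last first.
  case/orP=> [/reach_sub //|/andP[xt sy]]; apply: connect_trans (reach_sub xt) _.
  exact: connect_trans (connect1 E'_ts) (reach_sub sy).
case/connectP=> p + ->; elim: p x => [|z p IH] x /=; first by rewrite connect0.
rewrite E'E /add_edge /= => /andP[/orP[Exz|/andP[/eqP-> /eqP->]]].
all: case/IH/orP=> [zy|/andP[zt sy]].
- by rewrite (connect_trans (connect1 Exz) zy).
- by rewrite (connect_trans (connect1 Exz) zt) sy orbT.
- by rewrite connect0 zy orbT.
- by rewrite connect0 sy orbT.
Qed.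

Lemma scc_add_edge x : ~~ reach E s x -> scc E' x = scc E x.
Proof.
move=> nsx; apply/setP => y.
rewrite !inE !reach_add_edge (negbTE nsx) !andbF !orbF.
case yx: (reach E y x); rewrite ?andbF ?andbT //.
apply/orP/idP => [[//|/andP[_ sy]]|]; last by left.
by case/negP: nsx; apply: connect_trans sy yx.
Qed.

Definition avoids_edge C := (t \notin C) && (s \notin C).

Lemma out_edges_add_edge C : avoids_edge C -> out_edges E' C = out_edges E C.
Proof.
case/andP=> tC sC; apply/setP => -[a b]; rewrite !inE E'E /add_edge /=.
by case: (a =P t) => [->|]; rewrite ?(negbTE tC) ?andbF ?orbF.
Qed.

Lemma in_edges_add_edge C : avoids_edge C -> in_edges E' C = in_edges E C.
Proof.
case/andP=> tC sC; apply/setP => -[a b]; rewrite !inE E'E /add_edge /=.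
by case: (b =P s) => [->|]; rewrite ?(negbTE sC) ?andbF ?orbF.
Qed.

Lemma is_sSCC_add_edge C : avoids_edge C -> is_sSCC E' C = is_sSCC E C.
Proof.
move=> avC; rewrite /is_sSCC out_edges_add_edge // in_edges_add_edge //.
have [noin|] := boolP (in_edges E C == set0); last by rewrite !andbF.
have sccE x : x \in C -> scc E' x = scc E x.
  move=> xC; apply: scc_add_edge; apply: contra (proj2 (andP avC)) => sx.
  exact: in_edges0_reach noin xC sx.
congr (_ && _); apply/existsP/existsP => -[x /eqP Cx]; exists x.
  by rewrite -sccE Cx ?mem_scc.
by rewrite sccE Cx ?mem_scc.
Qed.

Hypotheses (src_s : is_sSCC E (scc E s)) (tgt_t : is_tSCC E (scc E t)).

Lemma not_reach_ts : ~~ reach E t s.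
Proof.
apply: contraT => /negbNE ts; have /and3P[_ _ noin] := src_s.
have /scc_eq eq_ts := in_edges0_reach noin (mem_scc E s) ts.
by move/sSCC_not_tSCC: src_s; rewrite -eq_ts tgt_t.
Qed.

(* An in-edge (a, b) of the target scc E t lies inside C, and t ~> a in E'
   cannot stay in E, so it uses the new edge. *)
Lemma sSCC_add_edge_mem C : is_sSCC E' C -> t \in C -> s \in C.
Proof.
move=> /and3P[sccC _ noin] tC; have /and3P[_ noout /set0Pn[[a b]]] := tgt_t.
rewrite inE /= => /andP[/andP[Eab aT] bT].
have bC : b \in C.
  rewrite (is_scc_memE sccC tC); move: bT; rewrite !inE.
  by case/andP=> /reach_sub -> /reach_sub ->.
have aC : a \in C.
  by apply: in_edges0_reach noin bC _; apply: reach_sub; apply: connect1.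
have := aC; rewrite {1}(is_scc_memE sccC tC) inE reach_add_edge.
case/andP=> /orP[ta|/andP[_ sa]] _.
  by case/negP: aT; apply: out_edges0_reach noout (mem_scc E t) ta.
exact: in_edges0_reach noin aC (reach_sub sa).
Qed.

Lemma sSCC_meeting_edge C : is_sSCC E C -> ~~ avoids_edge C -> C = scc E s.
Proof.
move=> srcC; have sccC := proj1 (andP srcC); rewrite negb_and !negbK.
case/orP=> [tC|sC]; last exact: is_scc_memE sccC sC.
by move/sSCC_not_tSCC: srcC; rewrite (is_scc_memE sccC tC) tgt_t.
Qed.

Lemma sSCC_add_edge_meeting_edge C :
  is_sSCC E' C -> ~~ avoids_edge C -> C = scc E' s.
Proof.
move=> srcC; rewrite negb_and !negbK => tsC.
apply: is_scc_memE (proj1 (andP srcC)) _.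
by case/orP: tsC => // /(sSCC_add_edge_mem srcC).
Qed.

Lemma sSCCs_add_edge_D1 :
  [set C | is_sSCC E' C] :\ scc E' s = [set C | is_sSCC E C] :\ scc E s.
Proof.
apply/setP => C; rewrite !inE.
have [avC|meetC] := boolP (avoids_edge C).
  have neq G : C != scc G s.
    by apply: contraNneq (proj2 (andP avC)) => ->; apply: mem_scc.
  by rewrite !neq is_sSCC_add_edge.
apply/idP/idP.
  case/andP=> neq /sSCC_add_edge_meeting_edge/(_ meetC) eqC.
  by rewrite eqC eqxx in neq.
case/andP=> neq /sSCC_meeting_edge/(_ meetC) eqC.
by rewrite eqC eqxx in neq.
Qed.

Lemma n_sSCC_add_edge : n_sSCC E' = (n_sSCC E).-1 + is_sSCC E' (scc E' s).
Proof.
rewrite /n_sSCC (cardsD1 (scc E' s)) sSCCs_add_edge_D1.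
by rewrite [in RHS](cardsD1 (scc E s)) !inE src_s addnC.
Qed.

Hypothesis wc : weakly_connected E.
Hypothesis tight_src : n_sSCC E = 1 \/
  exists s', [/\ is_sSCC E (scc E s'), scc E s' != scc E s & reach E s' t].

Lemma source_add_edge : is_sSCC E' (scc E' s) ->
  [/\ n_sSCC E = 1, 1 < n_tSCC E & ~~ is_tSCC E' (scc E' t)].
Proof.
move=> srcN; have /and3P[_ outN inN] := srcN.
have tN : t \in scc E' s := in_edges0_reach inN (mem_scc E' s) (connect1 E'_ts).
split; last by rewrite (scc_eq tN); apply: sSCC_not_tSCC.
  case: tight_src => [//|[s' [src_s' neq s't]]]; case/negP: neq.
  have s'N := in_edges0_reach inN tN (reach_sub s't).
  have ss' : reach E s s'.
    by move: s'N; rewrite inE reach_add_edge => /andP[/orP[|/andP[_]]].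
  have /and3P[_ _ ins'] := src_s'.
  by rewrite (scc_eq (in_edges0_reach ins' (mem_scc E s') ss')).
have /set0Pn[[u v]] := outN; rewrite inE /= => /andP[/andP[E'uv uN] vN].
have [y vy tgt_y] := reach_tSCC v wc not_reach_ts.
apply/card_gt1P; exists (scc E y), (scc E t); rewrite !inE tgt_y tgt_t.
split=> //; apply: contra vN => /eqP eq_yt.
have yt : reach E y t by have := mem_scc E y; rewrite eq_yt inE => /andP[].
have su : reach E' s u by move: uN; rewrite inE => /andP[].
have sv : reach E' s v := connect_trans su (connect1 E'uv).
rewrite inE sv /=.
exact: connect_trans (reach_sub (connect_trans vy yt)) (connect1 E'_ts).
Qed.

End AddEdge.

Section Converse.
Variables (V : finType) (G : rel V).
Implicit Types (C : {set V}) (x y : V).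

(* [converse ?G] unifies with any relation up to eta, so the rewrite rules
   below are always instantiated with an explicit graph. *)
Definition converse : rel V := [rel x y | G y x].

Lemma reach_converse x y : reach converse x y = reach G y x.
Proof. exact: connect_rev. Qed.

Lemma scc_converse x : scc converse x = scc G x.
Proof. by apply/setP => y; rewrite !inE !reach_converse andbC. Qed.

Lemma is_scc_converse C : is_scc converse C = is_scc G C.
Proof. by apply: eq_existsb => x; rewrite scc_converse. Qed.

Lemma out_edges_converse C :
  (out_edges converse C == set0) = (in_edges G C == set0).
Proof.
apply/eqP/eqP => /setP e; apply/setP => -[a b]; move: (e (b, a));
by rewrite !inE => <-; rewrite andbAC.
Qed.

Lemma in_edges_converse C :
  (in_edges converse C == set0) = (out_edges G C == set0).
Proof.
apply/eqP/eqP => /setP e; apply/setP => -[a b]; move: (e (b, a));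
by rewrite !inE => <-; rewrite andbAC.
Qed.

Lemma is_sSCC_converse C : is_sSCC converse C = is_tSCC G C.
Proof.
rewrite /is_sSCC /is_tSCC is_scc_converse out_edges_converse in_edges_converse.
by rewrite (andbC (_ != _)).
Qed.

Lemma is_tSCC_converse C : is_tSCC converse C = is_sSCC G C.
Proof.
rewrite /is_sSCC /is_tSCC is_scc_converse out_edges_converse in_edges_converse.
by rewrite (andbC (_ != _)).
Qed.

Lemma n_sSCC_converse : n_sSCC converse = n_tSCC G.
Proof. by apply: eq_card => C; rewrite !inE is_sSCC_converse. Qed.

Lemma n_tSCC_converse : n_tSCC converse = n_sSCC G.
Proof. by apply: eq_card => C; rewrite !inE is_tSCC_converse. Qed.

Lemma weakly_connected_converse :
  weakly_connected G -> weakly_connected converse.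
Proof.
move=> wc x y; rewrite (eq_connect (e' := [rel a b | G a b || G b a])) //.
by move=> a b /=; rewrite orbC.
Qed.

End Converse.

Section AddEdgeTarget.
Variables (V : finType) (E E' : rel V) (t s : V).
Hypothesis E'E : E' =2 add_edge E t s.
Hypotheses (src_s : is_sSCC E (scc E s)) (tgt_t : is_tSCC E (scc E t)).

Let E'E_converse : converse E' =2 add_edge (converse E) s t.
Proof. by move=> x y; rewrite /converse /= E'E /add_edge /= andbC. Qed.

Let src_t_converse : is_sSCC (converse E) (scc (converse E) t).
Proof. by rewrite is_sSCC_converse (scc_converse E). Qed.

Let tgt_s_converse : is_tSCC (converse E) (scc (converse E) s).
Proof. by rewrite is_tSCC_converse (scc_converse E). Qed.

Lemma n_tSCC_add_edge : n_tSCC E' = (n_tSCC E).-1 + is_tSCC E' (scc E' t).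
Proof.
have := n_sSCC_add_edge E'E_converse src_t_converse tgt_s_converse.
rewrite (n_sSCC_converse E') (n_sSCC_converse E).
by rewrite (scc_converse E') (is_sSCC_converse E').
Qed.

Lemma target_add_edge : weakly_connected E ->
  n_tSCC E = 1 \/
    (exists t', [/\ is_tSCC E (scc E t'), scc E t' != scc E t & reach E s t']) ->
  is_tSCC E' (scc E' t) ->
  [/\ n_tSCC E = 1, 1 < n_sSCC E & ~~ is_sSCC E' (scc E' s)].
Proof.
move=> /weakly_connected_converse wc tight_tgt.
have tight_src : n_sSCC (converse E) = 1 \/
    exists t', [/\ is_sSCC (converse E) (scc (converse E) t'),
                   scc (converse E) t' != scc (converse E) t
                 & reach (converse E) t' s].
  rewrite n_sSCC_converse.
  case: tight_tgt => [|[t' [tgt_t' neq st']]]; [by left | right].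
  by exists t'; rewrite is_sSCC_converse !(scc_converse E) reach_converse.
have := source_add_edge E'E_converse src_t_converse tgt_s_converse wc tight_src.
rewrite (n_sSCC_converse E) (n_tSCC_converse E) (is_tSCC_converse E').
by rewrite (is_sSCC_converse E') !(scc_converse E'); apply.
Qed.

End AddEdgeTarget.

Theorem proposition1 (V : finType) (E : rel V) (t s : V) :
  weakly_connected E -> tight E t s ->
  gamma (add_edge E t s) = (gamma E).-1.
Proof.
move=> wc [_ src_s tgt_t tight_src tight_tgt]; set E' := add_edge E t s.
have E'E : E' =2 add_edge E t s by [].
have source := source_add_edge E'E src_s tgt_t wc tight_src.
have target := target_add_edge E'E src_s tgt_t wc tight_tgt.
rewrite /gamma (n_sSCC_add_edge E'E src_s tgt_t) (n_tSCC_add_edge E'E src_s tgt_t).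
case src: (is_sSCC E' (scc E' s)); case tgt: (is_tSCC E' (scc E' t)).
- by have [_ _] := source src; rewrite tgt.
- by have [-> ? _] := source src; lia.
- by have [-> ? _] := target tgt; lia.
- lia.
Qed.
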